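(* Let $P_1,\dots,P_n\subset\mathbb{R}^d$ be convex polytopes each containing the origin, let $\mu\in\mathbb{R}^d$, and let $\Delta=\Delta(\mathcal{P};\mu)$. Let $\sigma,\tau\in\Delta$ be faces with $\sigma\cup\tau\in\Delta$. Then for any line $\ell$ through $\mu$, the sets $P_\sigma\cap\ell$ and $P_\tau\cap\ell$ lie on the same side of $\mu$, i.e. they are contained in the same connected component of $\ell\setminus\{\mu\}$.
   Context: For $\sigma\subseteq[n]$ write $P_\sigma=\sum_{i\in\sigma}P_i$ (Minkowski sum), with $P_\emptyset=\{0\}$; the Minkowski complex $\Delta(\mathcal{P};\mu)$ is the simplicial complex on vertex set $[n]$ whose faces are the $\sigma\subseteq[n]$ with $\mu\notin P_\sigma$. *)

From HB Require Import structures.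
From mathcomp Require Import all_boot all_order all_algebra.
From mathcomp Require Import reals.
Set Implicit Arguments. Unset Strict Implicit. Unset Printing Implicit Defensive.
Import Order.TTheory GRing.Theory Num.Theory.
Local Open Scope ring_scope.

Definition in_conv (R : realType) (d : nat) (s : seq 'rV[R]_d) (x : 'rV[R]_d) : Prop :=
  exists w : 'I_(size s) -> R,
    (forall i, 0 <= w i) /\ \sum_i w i = 1 /\ x = \sum_i w i *: s`_(val i).

Definition msum (R : realType) (d n : nat) (P : 'I_n -> 'rV[R]_d -> Prop)
  (sigma : {set 'I_n}) (x : 'rV[R]_d) : Prop :=
  exists f : 'I_n -> 'rV[R]_d,
    (forall i, i \in sigma -> P i (f i)) /\ x = \sum_(i in sigma) f i.

(* sigma is a face of the Minkowski complex Delta(P; mu) iff mu \notin P_sigma. *)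
Definition mink_face (R : realType) (d n : nat) (P : 'I_n -> 'rV[R]_d -> Prop)
  (mu : 'rV[R]_d) (sigma : {set 'I_n}) : Prop := ~ msum P sigma mu.

(* For the line l = {mu + t v | t in R} (v <> 0), the two connected components
   of l \ {mu} are {mu + t v | t > 0} and {mu + t v | t < 0}. *)
Definition same_side_on_line (R : realType) (d : nat) (mu v : 'rV[R]_d)
  (A B : 'rV[R]_d -> Prop) : Prop :=
  ((forall t : R, A (mu + t *: v) -> 0 < t) /\ (forall t : R, B (mu + t *: v) -> 0 < t))
  \/
  ((forall t : R, A (mu + t *: v) -> t < 0) /\ (forall t : R, B (mu + t *: v) -> t < 0)).

From HB Require Import structures.
From mathcomp Require Import all_boot all_order all_algebra.
From mathcomp Require Import reals.
From mathcomp Require Import ring.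
From Stdlib Require Import Classical.
Import Order.TTheory GRing.Theory Num.Theory.
Local Open Scope ring_scope.

(* P_sigma and P_tau both lie in the convex set P_(sigma ∪ tau), because every P_i
   contains the origin.  That set misses mu, and a convex set missing mu meets a line
   through mu on one side only: if it met the line at mu + a v and mu + b v with
   b < 0 < a, the segment between them would pass through mu. *)

Definition convex_pred {R : numDomainType} {V : lmodType R} (C : V -> Prop) : Prop :=
  forall x y (l : R), 0 <= l -> l <= 1 -> C x -> C y -> C ((1 - l) *: x + l *: y).

Lemma in_conv_convex (R : realType) (d : nat) (s : seq 'rV[R]_d) :
  convex_pred (in_conv s).
Proof.
move=> _ _ l l0 l1 [w1 [w1p [w1s ->]]] [w2 [w2p [w2s ->]]].
exists (fun i => (1 - l) * w1 i + l * w2 i); split; [|split].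
- by move=> i; rewrite addr_ge0 // mulr_ge0 // subr_ge0.
- by rewrite big_split /= -!mulr_sumr w1s w2s !mulr1 subrK.
- rewrite !scaler_sumr -big_split /=; apply: eq_bigr => i _.
  by rewrite !scalerA -scalerDl.
Qed.

Section MinkowskiSum.

Variables (R : realType) (d n : nat) (P : 'I_n -> 'rV[R]_d -> Prop).

Lemma msum_convex (rho : {set 'I_n}) :
  (forall i, convex_pred (P i)) -> convex_pred (msum P rho).
Proof.
move=> Pconv _ _ l l0 l1 [f1 [f1P ->]] [f2 [f2P ->]].
exists (fun i => (1 - l) *: f1 i + l *: f2 i); split.
- by move=> i hi; apply: Pconv => //; [apply: f1P | apply: f2P].
- by rewrite big_split /= !scaler_sumr.
Qed.

Lemma msum_subset (sigma rho : {set 'I_n}) x :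
  (forall i, P i 0) -> sigma \subset rho -> msum P sigma x -> msum P rho x.
Proof.
move=> P0 sub_sr [f [fP ->]].
exists (fun i => if i \in sigma then f i else 0); split.
- by move=> i _; case: ifP => // /fP.
- rewrite [RHS](big_setID sigma) /= (setIidPr sub_sr) [X in _ = _ + X]big1 ?addr0.
  + by apply: eq_bigr => i ->.
  + by move=> i; rewrite in_setD => /andP [/negbTE -> _].
Qed.

End MinkowskiSum.

Section ConvexOnLine.

Context {R : realFieldType} {V : lmodType R}.

Lemma segment_through_base (mu v : V) (a b : R) : b < 0 < a ->
  (1 - a / (a - b)) *: (mu + a *: v) + a / (a - b) *: (mu + b *: v) = mu.
Proof.
case/andP=> b0 a0; have ab : a - b != 0 by rewrite subr_eq0 gt_eqF // (lt_trans b0).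
rewrite !scalerDr !scalerA addrACA -scalerDl subrK scale1r -scalerDl.
have -> : (1 - a / (a - b)) * a + a / (a - b) * b = 0 by field.
by rewrite scale0r addr0.
Qed.

Lemma convex_line_one_side (C : V -> Prop) (mu v : V) :
  convex_pred C -> ~ C mu ->
  (forall t, C (mu + t *: v) -> 0 < t) \/ (forall t, C (mu + t *: v) -> t < 0).
Proof.
move=> Cconv Cmu.
have not_both_sides a b : C (mu + a *: v) -> C (mu + b *: v) -> b < 0 < a -> False.
  move=> Ca Cb /[dup] /andP[b0 a0] ba; apply: Cmu; rewrite -(segment_through_base mu v _ _ ba).
  have ab : 0 < a - b by rewrite subr_gt0 (lt_trans b0 a0).
  apply: Cconv => //; first by rewrite divr_ge0 ?ltW.
  by rewrite ler_pdivrMr // mul1r lerDl oppr_ge0 ltW.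
have t_neq0 t : C (mu + t *: v) -> t != 0.
  by apply: contraPneq => ->; rewrite scale0r addr0.
case: (classic (exists b, C (mu + b *: v) /\ b < 0)) => [[b [Cb b0]]|no_neg].
- right=> t Ct; case: ltgtP (t_neq0 t Ct) => // t0 _.
  by case: (not_both_sides t b) => //; rewrite b0 t0.
- left=> t Ct; case: ltgtP (t_neq0 t Ct) => // t0 _.
  by case: no_neg; exists t.
Qed.

End ConvexOnLine.

Theorem lemma5 (R : realType) (d n : nat) (V : 'I_n -> seq 'rV[R]_d)
  (h0 : forall i, in_conv (V i) 0) (mu : 'rV[R]_d)
  (sigma tau : {set 'I_n})
  (hs : mink_face (fun i => in_conv (V i)) mu sigma)
  (ht : mink_face (fun i => in_conv (V i)) mu tau)
  (hst : mink_face (fun i => in_conv (V i)) mu (sigma :|: tau))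
  (v : 'rV[R]_d) (hv : v != 0) :
  same_side_on_line mu v (msum (fun i => in_conv (V i)) sigma)
                         (msum (fun i => in_conv (V i)) tau).
Proof.
(* [hs] and [ht] follow from [hst], and the argument never needs [v != 0]. *)
set P := fun i => in_conv (V i).
have in_union (rho : {set 'I_n}) x : rho \subset sigma :|: tau -> msum P rho x -> msum P (sigma :|: tau) x.
  exact: msum_subset.
have union_convex : convex_pred (msum P (sigma :|: tau)).
  by apply: msum_convex => i; apply: in_conv_convex.
case: (convex_line_one_side _ mu v union_convex hst) => side; [left | right].
- by split=> t /in_union Ht; apply/side/Ht; rewrite ?subsetUl ?subsetUr.
- by split=> t /in_union Ht; apply/side/Ht; rewrite ?subsetUl ?subsetUr.
Qed.
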